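(* There is an absolute constant $C$ such that for every finite set $\mathcal{U}\subset\mathbb{R}$ there exists a family of finite automata (one per degree $d$), in which each node $i$ at each time step additionally reads its current input $u_i(t)\in\mathcal{U}$ and maintains variables $M_i(t)\in\mathcal{U}$ and $P_i(t)\in\{i\}\cup N(i)$, whose state at node $i$ can be stored in at most $C(\log|\mathcal{U}|+d(i))$ bits, with the following property. For every network and every collection of input sequences $(u_i(t))_{t\ge0}$, $u_i(t)\in\mathcal{U}$, for which there exists $T'$ with $u_i(t)=u_i(T')$ for all $i$ and all $t\ge T'$, there exists $T''$ such that for all $t\ge T''$: (i) $M_i(t)=\max_{j=1,\ldots,n}u_j(t)$ for every node $i$; and (ii) for every node $i$ there exist a node $j$ and an integer $K_0$ with $P_i^k(t)=j$ for all $k\ge K_0$, and $M_i(t)=u_j(t)$, where $P_i^1(t)=P_i(t)$ and $P_i^{k+1}(t)=P_{P_i^k(t)}(t)$.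
   Context: A network is a finite connected simple undirected graph $G=(V,E)$ with $V=\{1,\ldots,n\}$, together with a port labeling: for each node $i$ of degree $d(i)$, a bijection $\ell_i$ from the set $N(i)$ of neighbors of $i$ to $\{1,\ldots,d(i)\}$. Nodes run identical deterministic finite automata depending only on their degree, synchronously: at each round each node sends one message (from a finite message set) through each of its ports, and its next state depends only on its current state, its current input $u_i(t)$, and the messages received from each port (with neighbors distinguished only through local port numbers). Nodes have no global identifiers and no knowledge of $n$ or the graph; in particular the automata must work for every network and every port labeling. *)

From Stdlib Require Import Reals.
From mathcomp Require Import all_boot.
Set Implicit Arguments. Unset Strict Implicit. Unset Printing Implicit Defensive.

Definition deg (n : nat) (e : rel 'I_n) (i : 'I_n) : nat := #|[pred j | e i j]|.

(* A port labeling is given through its inverse: nb i : 'I_(deg i) -> 'I_n,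
   which must be a bijection onto N(i) (injective with values in N(i);
   since |N(i)| = deg i this is a bijection). *)
Definition is_network (n : nat) (e : rel 'I_n)
    (nb : forall i : 'I_n, 'I_(deg e i) -> 'I_n) : Prop :=
  [/\ 0 < n, symmetric e & irreflexive e] /\
  [/\ (forall i j, connect e i j),
      (forall i, injective (nb i)) &
      (forall i p, e i (nb i p))].

(* Variables M and P are functions of the state; outP = None means P = i itself,
   outP = Some p means P = the neighbor on port p. *)
Record automaton (Msg : finType) (d : nat) := Automaton {
  st : finType;
  init : st;
  send : st -> 'I_d -> Msg;
  trans : st -> R -> ('I_d -> Msg) -> st;
  outM : st -> R;
  outP : st -> option 'I_d }.

(* The message received by i on port p is what k = nb i p sent on its port q with
   nb k q = i (such q exists in a network; m0 is an irrelevant default). *)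
Fixpoint exec (n : nat) (e : rel 'I_n) (nb : forall i : 'I_n, 'I_(deg e i) -> 'I_n)
    (Msg : finType) (m0 : Msg) (A : forall d, automaton Msg d)
    (u : 'I_n -> nat -> R) (t : nat) : forall i : 'I_n, st (A (deg e i)) :=
  match t with
  | 0 => fun i => init (A (deg e i))
  | t'.+1 => fun i =>
      let x := exec nb m0 A u t' in
      trans (x i) (u i t')
        (fun p => let k := nb i p in
                  match [pick q | nb k q == i] with
                  | Some q => @send Msg _ (A (deg e k)) (x k) q
                  | None => m0
                  end)
  end.

Definition Mvar n (e : rel 'I_n) nb (Msg : finType) (m0 : Msg) A u t (i : 'I_n) : R :=
  outM (@exec n e nb Msg m0 A u t i).

Definition Pvar n (e : rel 'I_n) nb (Msg : finType) (m0 : Msg) A u t (i : 'I_n) : 'I_n :=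
  match outP (@exec n e nb Msg m0 A u t i) with
  | None => i
  | Some p => nb i p
  end.

Definition is_max n (v : 'I_n -> R) (M : R) : Prop :=
  (exists j, M = v j) /\ (forall j, Rle (v j) M).

From Stdlib Require Import Reals Lra FunctionalExtensionality Classical.
From mathcomp Require Import all_boot zify.
Set Implicit Arguments. Unset Strict Implicit. Unset Printing Implicit Defensive.

(* Each node stores an estimate M (an element of U), a parent pointer P (a
   port, or itself) and a "bad" flag; the state has O(log|U| + d) bits.  A
   good node adopts the estimate of a good neighbour beating both its own
   estimate and its input, making that neighbour its parent, or restarts from
   its input if the input beats its estimate.  A root whose input dropped
   below its estimate turns bad, badness spreads from parents to children,
   and a bad node without children restarts from its input.

   The proof has three stages.  (1) At all times estimates increase along
   parent pointers, bad nodes have bad parents, and the pointers are acyclic.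
   (2) Once the inputs are constant (from time T'), a good node with a bad
   ancestor [d] rounds later has [d] bad ancestors; so after [n] rounds the
   good nodes stay good, and after [n] more the bad leaves have all reset and
   no node is bad.  (3) Then estimates only increase inside the finite set U,
   hence freeze; a frozen configuration is locally maximal, so by
   connectivity all estimates agree, dominate every input, and equal the
   input of the root reached by following the pointers. *)

Definition Rltb (x y : R) : bool := if Rlt_dec x y then true else false.
Definition Reqb (x y : R) : bool := if Req_EM_T x y then true else false.

Lemma RltbP (x y : R) : reflect (Rlt x y) (Rltb x y).
Proof. by rewrite /Rltb; case: Rlt_dec => h; constructor. Qed.

Lemma ReqbP (x y : R) : reflect (x = y) (Reqb x y).
Proof. by rewrite /Reqb; case: Req_EM_T => h; constructor. Qed.

Lemma nat_mono_bounded_stationary (f : nat -> nat) (B : nat) :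
  {homo f : j k / j <= k} -> (forall k, f k <= B) ->
  exists S, forall k, S <= k -> f k = f S.
Proof.
move=> fmono fB.
(* Induction on the room [B - f j] left above the value at [j]: either [f]
   is constant from [j] on, or it grows at some [k >= j], using up room. *)
suff stat m j : B - f j <= m -> exists S, forall k, S <= k -> f k = f S.
  exact: (stat _ 0 (leqnn _)).
elim: m j => [|m IH] j room;
  have [[k jk fkj] | const] := classic (exists2 k, j <= k & f k <> f j);
  try by exists j => k jk; apply: NNPP => fkj; apply: const; exists k.
all: have := fmono _ _ jk; have := fB k.
- by move=> *; exfalso; lia.
- by move=> *; apply: (IH k); lia.
Qed.

Definition rank_below (l : seq R) (x : R) : nat := count (Rltb^~ x) l.

Lemma rank_below_le l x y : Rle x y -> rank_below l x <= rank_below l y.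
Proof.
move=> xy; apply: sub_count => z /RltbP zx; apply/RltbP; lra.
Qed.

Lemma rank_below_lt l x y : List.In x l -> Rlt x y -> rank_below l x < rank_below l y.
Proof.
rewrite /rank_below => + xy; elim: l => [|a l IH] //= [->|xl].
  have -> : Rltb x x = false by apply/RltbP; lra.
  have -> : Rltb x y by apply/RltbP.
  by rewrite add0n add1n ltnS; apply: rank_below_le; lra.
rewrite -addnS leq_add ?IH //.
by case: (RltbP a x) => ax; case: (RltbP a y) => ay //; lra.
Qed.

Lemma real_mono_in_list_stationary (l : seq R) (f : nat -> R) :
  (forall k, List.In (f k) l) -> (forall k, Rle (f k) (f k.+1)) ->
  exists S, forall k, S <= k -> f k.+1 = f k.
Proof.
move=> fl fmono.
have rank_mono : {homo (rank_below l \o f) : j k / j <= k}.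
  by apply: homo_leq => [//|j k m|k]; [exact: leq_trans | exact: rank_below_le].
have [S rankS] := nat_mono_bounded_stationary rank_mono (fun k => count_size _ l).
exists S => k Sk; case: (Rle_lt_or_eq_dec _ _ (fmono k)) => // fk.
have := rank_below_lt (fl k) fk.
by rewrite [X in X < _]rankS // [X in _ < X]rankS ?ltnn // leqW.
Qed.

Lemma eventually_forall (T : finType) (P : T -> nat -> Prop) :
  (forall x, exists S, forall s, S <= s -> P x s) ->
  exists S, forall s, S <= s -> forall x, P x s.
Proof.
move=> evP.
suff [S HS] : exists S, forall s, S <= s -> forall x, x \in enum T -> P x s.
  by exists S => s Ss x; apply: HS; rewrite ?mem_enum.
elim: (enum T) => [|a l [S HS]]; first by exists 0.
have [Sa HSa] := evP a.
exists (maxn S Sa) => s; rewrite geq_max => /andP [Ss Sas] x.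
by rewrite inE => /orP [/eqP -> | xl]; [exact: HSa | exact: HS].
Qed.

Lemma edge_nonincreasing_const (T : finType) (e : rel T) (f : T -> R) :
  (forall x y, e x y -> e y x) -> (forall x y, e x y -> Rle (f y) (f x)) ->
  forall x y, connect e x y -> f x = f y.
Proof.
move=> sym le x y /connectP [p xp ->] {y}; elim: p x xp => [|y p IH] x //=.
case/andP => xy yp; rewrite -(IH y yp).
by apply: Rle_antisym; apply: le => //; apply: sym.
Qed.

(* Parent-pointer structures: a map [f] on a finite type, the roots being its
   fixed points.  It is [acyclic] when following [f] from a non-root never
   returns to it; then every node reaches a root. *)
Section PointerForest.
Variables (T : finType) (f : T -> T).

Definition ancestors (x : T) := [pred y | fconnect f x y].

Lemma fconnect_root x y : f x = x -> fconnect f x y -> y = x.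
Proof.
move=> fx /iter_findex <-; elim: (findex _ _ _) => [|m IH] //.
by rewrite iterS IH.
Qed.

Lemma fconnect_parent x y : fconnect f x y -> y != x -> fconnect f (f x) y.
Proof.
move=> /iter_findex; case: (findex _ _ _) => [<-|m <-]; first by rewrite eqxx.
by rewrite iterSr fconnect_iter.
Qed.

Definition acyclic := forall x, f x != x -> ~~ fconnect f (f x) x.

Hypothesis f_acyclic : acyclic.

Lemma card_ancestors_parent x : f x != x -> #|ancestors (f x)| < #|ancestors x|.
Proof.
move=> fx; apply: proper_card; apply/properP; split.
  apply/subsetP => y; rewrite !inE => h.
  exact: connect_trans (fconnect1 _ x) h.
by exists x; rewrite !inE ?connect0 ?f_acyclic.
Qed.

Lemma iter_reaches_root x :
  exists K r, f r = r /\ forall k, K <= k -> iter k f x = r.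
Proof.
suff walk N y : #|ancestors y| <= N -> exists K r, f r = r /\ forall k, K <= k -> iter k f y = r.
  exact: walk _ x (leqnn _).
elim: N y => [|N IH] {}x xN.
  by move: xN; rewrite leqn0 => /eqP/card0_eq/(_ x); rewrite !inE connect0.
have [fx | fx] := eqVneq (f x) x.
  by exists 0, x; split=> // k _; elim: k => //= k ->.
have [K [r [fr Kr]]] := IH (f x) (leq_trans (card_ancestors_parent fx) xN).
by exists K.+1, r; split=> // [[|k]] // Kk; rewrite iterSr Kr.
Qed.

End PointerForest.

(* A state
   holds an estimate of the maximum (a position in [U]), a parent pointer
   (a port, or [None] when the node is its own parent, i.e. a root) and a
   "bad" flag marking estimates that are no longer backed by an input. *)
Section Automaton.
(* [i0] is an arbitrary position, used as the initial estimate. *)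
Variables (U : seq R) (i0 : 'I_(size U)).

Definition value (a : 'I_(size U)) : R := nth R0 U a.
Definition position (v : R) : 'I_(size U) := insubd i0 (find (Reqb v) U).

Lemma value_In a : List.In (value a) U.
Proof.
rewrite /value; case: a => /= k; elim: U k => [|a s IH] [|k] //= h.
  by left.
by right; apply: IH.
Qed.

Lemma value_position v : List.In v U -> value (position v) = v.
Proof.
move=> vU; have hasv : has (Reqb v) U.
  by elim: U vU => [|a s IH] //= [->|h]; [case: ReqbP | rewrite IH ?orbT].
rewrite /value /position val_insubd -has_find hasv.
by move: (nth_find R0 hasv) => /ReqbP.
Qed.

(* A node of degree 0 never needs the bad flag; restricting it keeps the
   number of states below [size U ^ 2 * 4 ^ d] for every degree. *)
Definition flag (d : nat) := 'I_((0 < d).+1).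
Definition state (d : nat) := ('I_(size U) * option 'I_d * flag d)%type.

(* Sent to a neighbour: the estimate, the bad flag, and whether the
   neighbour is the sender's parent. *)
Definition message := ('I_(size U) * bool * bool)%type.

Definition bad d (x : state d) : bool := val x.2 != 0.
Definition mark_bad d (x : state d) : state d := (x.1, inord 1).
Definition reset d (v : R) : state d := (position v, None, ord0).

Definition improve d (x : state d) (v : R) (msg : 'I_d -> message) : state d :=
  match [pick p | ~~ (msg p).1.2 && Rltb (Rmax (value x.1.1) v) (value (msg p).1.1)] with
  | Some p => ((msg p).1.1, Some p, ord0)
  | None => if Rltb (value x.1.1) v then reset d v else x
  end.

Definition transition d (x : state d) (v : R) (msg : 'I_d -> message) : state d :=
  if bad x then (if [exists p, (msg p).2] then x else reset d v)
  else match x.1.2 with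
       | Some p => if (msg p).1.2 then mark_bad x else improve x v msg
       | None => if Rltb v (value x.1.1) then
                   (if 0 < d then mark_bad x else reset d v)
                 else improve x v msg
       end.

Definition max_automaton (d : nat) : automaton message d :=
  @Automaton message d (state d) (i0, None, ord0)
    (fun x p => (x.1.1, bad x, x.1.2 == Some p))
    (@transition d)
    (fun x => value x.1.1)
    (fun x => x.1.2).

Lemma card_state d : #|st (max_automaton d)| <= size U ^ 2 * 2 ^ (2 * d).
Proof.
have flags : d.+1 * (0 < d).+1 <= 2 ^ (2 * d).
  rewrite mul2n -addnn expnD; apply: leq_mul; first exact: ltn_expl.
  by case: d => // d; rewrite expnS leq_pmulr ?expn_gt0.
have positions : size U <= size U ^ 2.
  by case: (size U) => // k; rewrite expnS expn1 leq_pmulr.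
by rewrite /= !card_prod card_option !card_ord -mulnA leq_mul.
Qed.

End Automaton.

Section Run.
Local Unset Implicit Arguments.
Variables (U : seq R) (i0 : 'I_(size U)).
Variables (n : nat) (e : rel 'I_n) (nb : forall i : 'I_n, 'I_(deg e i) -> 'I_n).
Hypothesis net : is_network nb.
Variables (m0 : message U) (u : 'I_n -> nat -> R).
Hypothesis u_in_U : forall i t, List.In (u i t) U.

Definition state_at t i : state U (deg e i) := exec nb m0 (max_automaton i0) u t i.
Definition est t i : R := value (state_at t i).1.1.
Definition par t i : 'I_n := if (state_at t i).1.2 is Some p then nb i p else i.
Definition isbad t i : bool := bad (state_at t i).
Definition has_child t i : bool := [exists j, (j != i) && (par t j == i)].

Definition received t i (p : 'I_(deg e i)) : message U :=
  ((state_at t (nb i p)).1.1, isbad t (nb i p), par t (nb i p) == i).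

Arguments state_at : simpl never.
Arguments est : simpl never.
Arguments par : simpl never.
Arguments isbad : simpl never.
Arguments has_child : simpl never.

Lemma edge_sym i j : e i j -> e j i.
Proof. by case: net => [[_ sym _] _]; rewrite sym. Qed.

Lemma edge_irrefl i : e i i = false.
Proof. by case: net => [[_ _ irr] _]; rewrite irr. Qed.

Lemma nb_edge i p : e i (nb i p).
Proof. by case: net => [_ [_ _ h]]. Qed.

Lemma nb_inj i : injective (nb i).
Proof. by case: net => [_ [_ h _]]. Qed.

Lemma nb_neq i p : (nb i p == i) = false.
Proof. by apply/eqP => h; have := nb_edge i p; rewrite h edge_irrefl. Qed.

Lemma edge_deg i j : e i j -> 0 < deg e i.
Proof. by move=> h; apply/card_gt0P; exists j. Qed.

Lemma nb_onto i j : e i j -> exists p, nb i p = j.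
Proof.
move=> ij.
have sub : image (nb i) 'I_(deg e i) \subset [pred j | e i j].
  by apply/subsetP => x /imageP [p _ ->]; rewrite inE nb_edge.
have := subset_leqif_card sub.
rewrite card_image ?card_ord /deg; last exact: nb_inj.
case=> _; rewrite eqxx => /esym /subsetP onto.
by case/imageP: (onto j ij) => p _ ->; exists p.
Qed.

Lemma state_step t i :
  state_at t.+1 i = transition i0 (state_at t i) (u i t) (received t i).
Proof.
rewrite /state_at /=; congr transition; apply: functional_extensionality => p.
set k := nb i p.
have [q0 kq0] := nb_onto _ _ (edge_sym _ _ (nb_edge i p)).
case: pickP => [q /eqP kq | none]; last by have := none q0; rewrite kq0 eqxx.
rewrite /received /isbad /par /state_at /=; congr (_, _).
case: (exec nb m0 (max_automaton i0) u t k).1.2 => [q'|] /=.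
  by rewrite -/k -kq (inj_eq (nb_inj k)).
by apply/esym/eqP => ki; have := nb_edge i p; rewrite ki edge_irrefl.
Qed.

Lemma par_edge t i : par t i != i -> e i (par t i).
Proof. by rewrite /par; case: (state_at t i).1.2 => [p|]; rewrite ?eqxx ?nb_edge. Qed.

Lemma received_child t i : [exists p, (received t i p).2] = has_child t i.
Proof.
apply/existsP/existsP => [[p /= ip] | [j /andP [ji /eqP ij]]].
  by exists (nb i p); rewrite ip nb_neq.
have : e j (par t j) by rewrite par_edge // ij eq_sym.
by rewrite ij => /edge_sym /nb_onto [p pj]; exists p; rewrite /= pj ij.
Qed.

Variant step_spec t i : Prop :=
| BadStay of isbad t i & has_child t i & state_at t.+1 i = state_at t i
| BadReset of isbad t i & ~~ has_child t i &
    est t.+1 i = u i t & par t.+1 i = i & ~~ isbad t.+1 i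
| CatchParent of ~~ isbad t i & par t i != i & isbad t (par t i) &
    est t.+1 i = est t i & par t.+1 i = par t i & isbad t.+1 i
| CatchRoot of ~~ isbad t i & par t i = i & Rlt (u i t) (est t i) &
    est t.+1 i = est t i & par t.+1 i = i & isbad t.+1 i
| IsolatedReset of ~~ isbad t i & par t i = i & Rlt (u i t) (est t i) & deg e i = 0 &
    est t.+1 i = u i t & par t.+1 i = i & ~~ isbad t.+1 i
| Adopt k of ~~ isbad t i & e i k & ~~ isbad t k &
    Rlt (Rmax (est t i) (u i t)) (est t k) &
    est t.+1 i = est t k & par t.+1 i = k & ~~ isbad t.+1 i
| InputReset of ~~ isbad t i & Rlt (est t i) (u i t) &
    est t.+1 i = u i t & par t.+1 i = i & ~~ isbad t.+1 i
| Stay of ~~ isbad t i & (par t i != i -> ~~ isbad t (par t i)) &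
    (par t i = i -> ~ Rlt (u i t) (est t i)) &
    (forall k, e i k -> ~~ isbad t k -> Rle (est t k) (Rmax (est t i) (u i t))) &
    ~ Rlt (est t i) (u i t) & state_at t.+1 i = state_at t i.

Lemma improve_spec t i :
  ~~ isbad t i -> (par t i != i -> ~~ isbad t (par t i)) ->
  (par t i = i -> ~ Rlt (u i t) (est t i)) ->
  state_at t.+1 i = improve i0 (state_at t i) (u i t) (received t i) ->
  step_spec t i.
Proof.
move=> good par_good root_ok; rewrite /improve.
case: pickP => [q /andP [q_good /RltbP q_beats] | none] next.
  by apply: (Adopt _ _ (nb i q)); rewrite ?nb_edge // /est /par /isbad next.
case: RltbP next => [lt | nlt] next.
  by apply: InputReset; rewrite // /est /par /isbad next ?value_position.
apply: Stay => // k /nb_onto [p <-] k_good.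
apply: Rnot_lt_le => beats; have := none p.
by rewrite /= k_good; case: RltbP.
Qed.

Lemma stepP t i : step_spec t i.
Proof.
move: (state_step t i); rewrite /transition -/(isbad t i).
case: ifP => [bad_i | /negbT good].
  rewrite received_child; case: ifP => [child | /negbT nochild] next.
    exact: BadStay.
  by apply: BadReset; rewrite // /est /par /isbad next ?value_position.
rewrite -/(est t i); case port: (state_at t i).1.2 => [p|].
  have par_i : par t i = nb i p by rewrite /par port.
  rewrite /= -/(isbad t (nb i p)); case: ifP => [bad_p | /negbT good_p] next.
    apply: CatchParent; rewrite ?par_i ?nb_neq //.
    - by rewrite /est next.
    - by rewrite /par next port.
    - by rewrite /isbad /bad next /= inordK // (edge_deg _ _ (nb_edge i p)).
  by apply: (improve_spec _ _ good) next; rewrite par_i ?nb_neq // => /eqP; rewrite nb_neq.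
have par_i : par t i = i by rewrite /par port.
case: RltbP => [lt | nlt] next; last first.
  by apply: (improve_spec _ _ good) next; rewrite par_i ?eqxx.
case: ifP next => [deg_pos | /negbT deg0] next.
  apply: CatchRoot => //.
  - by rewrite /est next.
  - by rewrite /par next port.
  - by rewrite /isbad /bad next /= inordK // deg_pos.
apply: IsolatedReset; rewrite // /est /par /isbad ?next ?value_position //.
by move: deg0; case: (deg e i).
Qed.

Lemma stay_fields t i : state_at t.+1 i = state_at t i ->
  [/\ est t.+1 i = est t i, par t.+1 i = par t i & isbad t.+1 i = isbad t i].
Proof. by move=> h; rewrite /est /par /isbad h. Qed.

Lemma has_childP t k : reflect (exists j, j != k /\ par t j = k) (has_child t k).
Proof.
apply: (iffP existsP) => [[j /andP [jk /eqP jpar]] | [j [jk jpar]]]; exists j => //.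
by rewrite jk jpar eqxx.
Qed.

Lemma parent_has_child t i : par t i != i -> has_child t (par t i).
Proof. by move=> h; apply/has_childP; exists i; split => //; rewrite eq_sym. Qed.

Lemma has_child_deg t k : has_child t k -> 0 < deg e k.
Proof.
case/has_childP => j [jk jpar]; apply: (edge_deg k j); apply: edge_sym.
by rewrite -jpar par_edge // jpar eq_sym.
Qed.

Lemma bad_parent_stays t k : isbad t k -> has_child t k -> state_at t.+1 k = state_at t k.
Proof. by move=> bk ck; case: (stepP t k) => //; rewrite ?bk ?ck. Qed.

Lemma est_nondecr t k : has_child t k \/ (~~ isbad t k /\ 0 < deg e k) ->
  Rle (est t k) (est t.+1 k).
Proof.
move=> H; case: (stepP t k).
- by move=> _ _ /stay_fields [-> _ _]; apply: Rle_refl.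
- by move=> bk nck; case: H => [ck | [gk _]]; [rewrite ck in nck | rewrite bk in gk].
- by move=> _ _ _ -> _ _; apply: Rle_refl.
- by move=> _ _ _ -> _ _; apply: Rle_refl.
- by move=> _ _ _ deg0; case: H => [/has_child_deg | [_]]; rewrite deg0.
- move=> k' _ _ _ lt -> _ _; apply: Rlt_le; apply: Rle_lt_trans lt; apply: Rmax_l.
- by move=> _ lt -> _ _; apply: Rlt_le.
- by move=> _ _ _ _ _ /stay_fields [-> _ _]; apply: Rle_refl.
Qed.

Lemma new_parent t c : par t.+1 c != c ->
  par t.+1 c = par t c \/ Rlt (est t c) (est t (par t.+1 c)).
Proof.
case: (stepP t c) => [_ _ /stay_fields [_ -> _] | _ _ _ -> | _ _ _ _ -> | _ _ _ _ -> |
  _ _ _ _ _ -> | k _ _ _ lt _ -> _ | _ _ _ -> | _ _ _ _ _ /stay_fields [_ -> _]];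
  rewrite ?eqxx; try by left.
by right; apply: Rle_lt_trans lt; apply: Rmax_l.
Qed.

Definition invariant t :=
  [/\ (forall i, par t i != i -> Rle (est t i) (est t (par t i))),
      (forall i, par t i != i -> isbad t i -> isbad t (par t i)) &
      acyclic (par t)].

Lemma invariant0 : invariant 0.
Proof. by split => i; rewrite /par /state_at /= eqxx. Qed.

Section InvariantStep.
Variable t : nat.
Hypothesis inv : invariant t.

(* An old parent's estimate did not drop (it has a child), and a new parent
   was adopted for its larger estimate. *)
Lemma est_le_par_step i : par t.+1 i != i -> Rle (est t.+1 i) (est t.+1 (par t.+1 i)).
Proof.
case: inv => est_par _ _.
have old_parent : par t i != i -> Rle (est t i) (est t.+1 (par t i)).
  move=> pi; apply: Rle_trans (est_par i pi) (est_nondecr _ _ _).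
  by left; apply: parent_has_child.
case: (stepP t i) => [_ _ /stay_fields [-> -> _] | _ _ _ -> | _ _ _ -> -> _ |
  _ _ _ _ -> | _ _ _ _ _ -> | k _ ik gk _ -> -> _ | _ _ _ -> | _ _ _ _ _ /stay_fields [-> -> _]];
  rewrite ?eqxx //.
by move=> _; apply: est_nondecr; right; split => //; apply: (edge_deg k i); apply: edge_sym.
Qed.

(* A bad parent with a child stays bad, and a node only turns bad under a
   bad parent or as a root. *)
Lemma bad_par_step i : par t.+1 i != i -> isbad t.+1 i -> isbad t.+1 (par t.+1 i).
Proof.
case: inv => _ bad_par _.
have old_parent : par t i != i -> isbad t (par t i) -> isbad t.+1 (par t i).
  move=> pi bpi; have [_ _ ->] := stay_fields _ _ (bad_parent_stays t _ bpi (parent_has_child t i pi)).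
  exact: bpi.
case: (stepP t i) => [bi _ /stay_fields [_ -> ->] pi _ | _ _ _ -> | _ pi bpi _ -> _ _ _ |
  _ _ _ _ -> | _ _ _ _ _ -> | k _ _ _ _ _ _ /negP // | _ _ _ -> |
  gi _ _ _ _ /stay_fields [_ _ ->]]; rewrite ?eqxx //.
- exact: old_parent (bad_par i pi bi).
- exact: old_parent.
- by rewrite (negbTE gi).
Qed.

Lemma est_le_new_par c : Rle (est t c) (est t (par t.+1 c)).
Proof.
have [-> | c_moved] := eqVneq (par t.+1 c) c; first exact: Rle_refl.
case: (new_parent t c c_moved) => [same | lt]; last exact: Rlt_le.
by case: inv => est_par _ _; rewrite same; apply: est_par; rewrite -same.
Qed.

Lemma est_le_new_ancestor a c : Rle (est t c) (est t (iter a (par t.+1) c)).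
Proof.
elim: a => [|a IH] /=; first exact: Rle_refl.
exact: Rle_trans IH (est_le_new_par _).
Qed.

(* Around a cycle of new pointers no old estimate can strictly increase, so
   every pointer on it is an old one. *)
Lemma cycle_pointers_old i K : par t.+1 i != i -> iter K.+1 (par t.+1) i = i ->
  forall a, a <= K -> par t.+1 (iter a (par t.+1) i) = par t (iter a (par t.+1) i).
Proof.
move=> i_moved cycle a aK; set c := iter a (par t.+1) i.
have back : iter (K.+1 - a) (par t.+1) c = i by rewrite /c -iterD subnK // leqW.
have c_moved : par t.+1 c != c.
  apply/eqP => c_root; move: i_moved; rewrite -back.
  have fixed m : iter m (par t.+1) c = c by elim: m => //= m ->.
  by rewrite fixed c_root eqxx.
case: (new_parent t c c_moved) => // lt; exfalso.
have := est_le_new_ancestor (K - a) (par t.+1 c).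
rewrite -iterSr -subSn // back.
have := est_le_new_ancestor a i; rewrite -/c; lra.
Qed.

(* Hence a cycle of new pointers would already be a cycle at time [t]. *)
Lemma acyclic_step : acyclic (par t.+1).
Proof.
move=> i i_moved; apply/negP => /iter_findex; set K := findex _ _ _ => cycle.
have {}cycle : iter K.+1 (par t.+1) i = i by rewrite iterSr.
have old_iter a : a <= K.+1 -> iter a (par t) i = iter a (par t.+1) i.
  elim: a => [//|a IH aK].
  by rewrite !iterS IH ?(ltnW aK) // (cycle_pointers_old i K i_moved cycle a aK).
have same : par t i = par t.+1 i := old_iter 1 isT.
case: inv => _ _ /(_ i); rewrite same => /(_ i_moved) /negP; apply.
rewrite -same; have := fconnect_iter (par t) K (par t i).
by rewrite -iterSr old_iter // cycle.
Qed.

End InvariantStep.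

Lemma invariant_all t : invariant t.
Proof.
elim: t => [|t inv]; first exact: invariant0.
by split; [exact: est_le_par_step | exact: bad_par_step | exact: acyclic_step].
Qed.

Lemma par_acyclic t : acyclic (par t).
Proof. by case: (invariant_all t). Qed.

Lemma root_est_le_input t i : ~~ isbad t.+1 i -> par t.+1 i = i -> Rle (est t.+1 i) (u i t).
Proof.
case: (stepP t i) => [bi _ /stay_fields [_ _ ->] | _ _ -> _ _ | _ _ _ _ _ -> |
  _ _ _ _ _ -> | _ _ _ _ -> _ _ | k _ ik _ _ _ -> _ | _ _ -> _ _ |
  _ _ root_ok _ _ /stay_fields [-> -> _]] //; rewrite ?bi //; try by move=> *; apply: Rle_refl.
- by move=> _ ki; move: ik; rewrite ki edge_irrefl.
- by move=> _ ii; apply: Rnot_lt_le; apply: root_ok.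
Qed.

Lemma good_child_step s j : ~~ isbad s.+1 j -> par s.+1 j != j ->
  ~~ isbad s j /\ ~~ isbad s (par s.+1 j).
Proof.
case: (stepP s j) => [bj _ /stay_fields [_ _ ->] | _ _ _ -> | _ _ _ _ _ -> |
  _ _ _ _ _ -> | _ _ _ _ _ -> | k gj _ gk _ _ -> _ | _ _ _ -> |
  gj par_good _ _ _ /stay_fields [_ -> _]]; rewrite ?bj ?eqxx //.
by move=> _ /par_good.
Qed.

Lemma bad_chain_stays s k : isbad s k -> has_child s k -> forall a,
  [/\ isbad s (iter a (par s) k), has_child s (iter a (par s) k)
    & iter a (par s.+1) k = iter a (par s) k].
Proof.
move=> bk ck; elim=> [|a [ba ca same]]; first by split.
have [_ par_same _] := stay_fields _ _ (bad_parent_stays s _ ba ca).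
rewrite !iterS same par_same.
have [-> | moved] := eqVneq (par s (iter a (par s) k)) (iter a (par s) k); first by split.
split=> //; last exact: parent_has_child.
by case: (invariant_all s) => _ bad_par _; apply: bad_par.
Qed.

Definition bad_ancestors t x := [pred y | fconnect (par t) x y && isbad t y].

Section ConstantInputs.
Variable T' : nat.
Hypothesis u_const : forall i t, T' <= t -> u i t = u i T'.

Lemma root_est_le_input_late t i : T'.+1 <= t -> ~~ isbad t i -> par t i = i ->
  Rle (est t i) (u i t).
Proof.
case: t => [//|t] Tt gi ri.
by rewrite (u_const i _ (ltnW Tt)) -(u_const i _ Tt); apply: root_est_le_input.
Qed.

Lemma turns_bad s k : T'.+1 <= s -> ~~ isbad s k -> isbad s.+1 k ->
  [/\ par s k != k, isbad s (par s k) & par s.+1 k = par s k].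
Proof.
move=> Ts gk; case: (stepP s k).
- by move=> bk; rewrite bk in gk.
- by move=> bk; rewrite bk in gk.
- by move=> _ pk bpk _ -> _.
- move=> _ rk lt _ _ _ _; have := root_est_le_input_late s k Ts gk rk; lra.
- by move=> _ _ _ _ _ _ /negP.
- by move=> k' _ _ _ _ _ _ /negP.
- by move=> _ _ _ _ /negP.
- by move=> _ _ _ _ _ /stay_fields [_ _ ->] bk; rewrite bk in gk.
Qed.

(* A node that turns bad keeps all the bad ancestors it had, and adds itself. *)
Lemma bad_ancestors_grow s k : T'.+1 <= s -> ~~ isbad s k -> isbad s.+1 k ->
  #|bad_ancestors s k| < #|bad_ancestors s.+1 k|.
Proof.
move=> Ts gk bk'; have [moved bp par_same] := turns_bad s k Ts gk bk'.
apply: proper_card; apply/properP; split; last first.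
  by exists k; rewrite !inE ?connect0 ?bk' // (negbTE gk) andbF.
apply/subsetP => z; rewrite !inE => /andP [kz bz].
have zk : z != k by apply/eqP => zk; move: gk; rewrite -zk bz.
move/iter_findex: (fconnect_parent kz zk); set a := findex _ _ _ => pz.
have [ba ca same] := bad_chain_stays s _ bp (parent_has_child s k moved) a.
rewrite pz in ba ca same.
have [_ _ ->] := stay_fields _ _ (bad_parent_stays s _ ba ca).
rewrite ba andbT; apply: connect_trans (fconnect1 _ k) _.
by rewrite par_same -same fconnect_iter.
Qed.

Lemma many_bad_ancestors d j : ~~ isbad (T'.+1 + d) j ->
  (exists y, y \in bad_ancestors (T'.+1 + d) j) -> d <= #|bad_ancestors (T'.+1 + d) j|.
Proof.
elim: d j => [//|d IHd] j; rewrite addnS; set s := T'.+1 + d.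
have Ts : T'.+1 <= s := leq_addr d _.
suff walk N j' : #|ancestors (par s.+1) j'| <= N -> ~~ isbad s.+1 j' ->
    (exists y, y \in bad_ancestors s.+1 j') -> d.+1 <= #|bad_ancestors s.+1 j'|.
  exact: walk _ j (leqnn _).
elim: N j' => [|N IHN] {}j jN gj [y].
  by move: jN; rewrite leqn0 => /eqP/card0_eq/(_ j); rewrite !inE connect0.
rewrite inE => /andP [jy b_y].
have yj : y != j by apply/eqP => yj; move: gj; rewrite -yj b_y.
have moved : par s.+1 j != j.
  by apply/eqP => root; move: yj; rewrite (fconnect_root root jy) eqxx.
set k := par s.+1 j.
have [gsj gsk] := good_child_step s j gj moved.
have sub : #|bad_ancestors s.+1 k| <= #|bad_ancestors s.+1 j|.
  apply: subset_leq_card; apply/subsetP => z; rewrite !inE => /andP [kz bz].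
  by rewrite bz (connect_trans (fconnect1 _ j) kz).
apply: leq_trans sub; case bk: (isbad s.+1 k).
  have [_ bp _] := turns_bad s k Ts gsk bk.
  apply: leq_ltn_trans (bad_ancestors_grow s k Ts gsk bk).
  by apply: (IHd k gsk); exists (par s k); rewrite inE (fconnect1 (par s) k) bp.
apply: IHN; last by exists y; rewrite inE b_y andbT (fconnect_parent jy yj).
  by rewrite -ltnS; apply: leq_trans (card_ancestors_parent (par_acyclic s.+1) moved) jN.
by rewrite bk.
Qed.

(* [n] rounds after the inputs settled, good nodes have only good ancestors:
   otherwise they would have more than [n - 1] bad ancestors. *)
Lemma good_ancestors s j y : T'.+1 + n <= s -> ~~ isbad s j -> fconnect (par s) j y ->
  ~~ isbad s y.
Proof.
move=> Ts gj jy; apply/negP => b_y.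
have T1s : T'.+1 <= s by lia.
have := many_bad_ancestors (s - T'.+1) j; rewrite subnKC // => /(_ gj) many.
have lower : s - T'.+1 <= #|bad_ancestors s j| by apply: many; exists y; rewrite inE jy b_y.
have upper : #|bad_ancestors s j| < #|'I_n|.
  apply: proper_card; apply/properP; split; first exact/subsetP.
  by exists j => //; rewrite !inE (negbTE gj) andbF.
rewrite card_ord in upper; lia.
Qed.

Lemma stays_good s x : T'.+1 + n <= s -> ~~ isbad s x -> ~~ isbad s.+1 x.
Proof.
move=> Ts gx; apply/negP => bx.
have [_ bp _] := turns_bad s x (leq_trans (leq_addr n _) Ts) gx bx.
by move: (good_ancestors s x _ Ts gx (fconnect1 _ x)); rewrite bp.
Qed.

(* A bad node with the most ancestors has no child (its children would be
   bad too); it is a leaf of the bad forest. *)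
Lemma bad_leaf s x : T'.+1 + n <= s -> isbad s x -> exists2 z, isbad s z & ~~ has_child s z.
Proof.
move=> Ts bx; case: (arg_maxnP (fun z => #|ancestors (par s) z|) bx) => z bz zmax.
exists z => //; apply/has_childP => -[c [cz cpar]].
have bc : isbad s c.
  by apply: contraT => gc; move: (good_ancestors s c _ Ts gc (fconnect1 _ c)); rewrite cpar bz.
have c_moved : par s c != c by rewrite cpar eq_sym.
have := zmax c bc; have := card_ancestors_parent (par_acyclic s) c_moved; rewrite cpar.
lia.
Qed.

(* Meanwhile the bad leaves reset, so the number of bad nodes decreases. *)
Lemma bad_count_decreases s : T'.+1 + n <= s -> (exists x, isbad s x) ->
  #|[pred x | isbad s.+1 x]| < #|[pred x | isbad s x]|.
Proof.
move=> Ts [x bx]; have [z bz nz] := bad_leaf s x Ts bx.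
apply: proper_card; apply/properP; split.
  by apply/subsetP => y; rewrite !inE; apply: contraLR => gy; apply: stays_good.
by exists z; rewrite !inE //; case: (stepP s z) => //; rewrite ?bz ?(negbTE nz).
Qed.

Lemma no_bad_late s x : T'.+1 + n + n <= s -> ~~ isbad s x.
Proof.
set T1 := T'.+1 + n.
have count_bound d : #|[pred x | isbad (T1 + d) x]| <= n - d.
  elim: d => [|d IH].
    by rewrite addn0 subn0; have := max_card [pred x | isbad T1 x]; rewrite card_ord.
  rewrite addnS; have Ts : T'.+1 + n <= T1 + d := leq_addr _ _.
  case: (boolP [exists x, isbad (T1 + d) x]) => [/existsP some_bad | /existsPn none_bad].
    by have := bad_count_decreases _ Ts some_bad; lia.
  suff -> : #|[pred x | isbad (T1 + d).+1 x]| = 0 by [].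
  by apply: eq_card0 => y; rewrite !inE; apply: negbTE; apply: stays_good Ts _.
move=> Ts; apply/negP => bx.
have := count_bound (s - T1); rewrite subnKC; last by lia.
have -> : n - (s - T1) = 0 by lia.
by rewrite leqn0 => /eqP/card0_eq/(_ x); rewrite inE bx.
Qed.

Lemma late_step s i : T'.+1 + n + n <= s ->
  (state_at s.+1 i = state_at s i /\
   (forall k, e i k -> Rle (est s k) (Rmax (est s i) (u i s))) /\ ~ Rlt (est s i) (u i s))
  \/ Rlt (est s i) (est s.+1 i).
Proof.
move=> Ts; have good := no_bad_late s _ Ts; have T1s : T'.+1 <= s by lia.
case: (stepP s i).
- by move=> bi; have := good i; rewrite bi.
- by move=> bi; have := good i; rewrite bi.
- by move=> _ _ bp; have := good (par s i); rewrite bp.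
- move=> gi ri lt _ _ _; have := root_est_le_input_late s i T1s gi ri; lra.
- move=> gi ri lt _ _ _ _; have := root_est_le_input_late s i T1s gi ri; lra.
- by move=> k _ _ _ lt -> _ _; right; apply: Rle_lt_trans lt; apply: Rmax_l.
- by move=> _ lt -> _ _; right.
- by move=> _ _ _ dom nlt stay; left; split=> //; split=> // k ik; apply: dom ik (good k).
Qed.

(* Estimates then only increase within [U], so each eventually stops. *)
Lemma est_stationary i : exists S, forall s, S <= s -> est s.+1 i = est s i.
Proof.
set T2 := T'.+1 + n + n.
have mono k : Rle (est (T2 + k) i) (est (T2 + k.+1) i).
  rewrite addnS; case: (late_step (T2 + k) i (leq_addr _ _)) => [[stay _] | lt].
    by have [-> _ _] := stay_fields _ _ stay; apply: Rle_refl.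
  exact: Rlt_le.
have [S HS] := real_mono_in_list_stationary (l := U) (f := fun k => est (T2 + k) i)
  (fun k => value_In _) mono.
exists (T2 + S) => s Ss; have T2s : T2 <= s by lia.
by have := HS (s - T2) ltac:(lia); rewrite /= addnS subnKC.
Qed.

(* The configuration eventually freezes; then estimates agree across edges
   (connectivity), dominate all inputs, and equal the input of the root that
   each node's pointers lead to. *)
Lemma converge : exists T'', forall t, T'' <= t -> forall i,
  is_max (fun j => u j t) (est t i) /\
  exists j K0, (forall k, K0 <= k -> iter k (par t) i = j) /\ est t i = u j t.
Proof.
have [S stat] := eventually_forall est_stationary.
exists (maxn S (T'.+1 + n + n)) => t; rewrite geq_max => /andP [St Tt] i.
have T1t : T'.+1 <= t by lia.
have frozen k : (forall k', e k k' -> Rle (est t k') (Rmax (est t k) (u k t))) /\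
    ~ Rlt (est t k) (u k t).
  case: (late_step t k Tt) => [[_ h] | lt]; first exact: h.
  by rewrite (stat t St k) in lt; case: (Rlt_irrefl _ lt).
have ge_input k : Rle (u k t) (est t k) by apply: Rnot_lt_le; case: (frozen k).
have local_max k k' : e k k' -> Rle (est t k') (est t k).
  by move=> kk'; rewrite -(Rmax_left _ _ (ge_input k)); apply: (frozen k).1.
have same k k' : est t k = est t k'.
  by apply: (edge_nonincreasing_const edge_sym local_max); case: net => _ [].
have [K [r [root Kr]]] := iter_reaches_root (par_acyclic t) i.
have est_r : est t r = u r t.
  apply: Rle_antisym; last exact: ge_input.
  exact: root_est_le_input_late t r T1t (no_bad_late t r Tt) root.
split; first by split=> [|j]; [exists r; rewrite (same i r) | rewrite (same i j)].
by exists r, K; split => //; rewrite (same i r).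
Qed.

End ConstantInputs.

End Run.

Theorem theorem5 :
  exists C : nat,
  forall U : seq R, U <> [::] -> List.NoDup U ->
  exists (Msg : finType) (m0 : Msg) (A : forall d : nat, automaton Msg d),
    (forall d : nat, #|st (A d)| <= size U ^ C * 2 ^ (C * d)) /\
    (forall (d : nat) (s : st (A d)), List.In (outM s) U) /\
    (forall (n : nat) (e : rel 'I_n) (nb : forall i : 'I_n, 'I_(deg e i) -> 'I_n),
       is_network nb ->
       forall u : 'I_n -> nat -> R,
       (forall i t, List.In (u i t) U) ->
       (exists T' : nat, forall i t, T' <= t -> u i t = u i T') ->
       exists T'' : nat, forall t : nat, T'' <= t -> forall i : 'I_n,
         is_max (fun j => u j t) (Mvar nb m0 A u t i) /\
         exists (j : 'I_n) (K0 : nat),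
           (forall k : nat, K0 <= k -> iter k (Pvar nb m0 A u t) i = j) /\
           Mvar nb m0 A u t i = u j t).
Proof.
exists 2 => U U_nonempty _.
have U_pos : 0 < size U by case: U U_nonempty.
pose i0 : 'I_(size U) := Ordinal U_pos.
exists (message U), (i0, false, false), (max_automaton i0).
split; first exact: card_state.
split; first by move=> d s; apply: value_In.
move=> n e nb net u u_in_U [T' u_const].
exact: (converge U i0 n e nb net (i0, false, false) u u_in_U T' u_const).
Qed.
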